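(* Let $(M,A)$ be a $d$-dimensional BUT-manifold. Suppose $M$ is covered by a family $\mathcal F$ of $d+2$ closed subsets $C_1,\ldots,C_{d+2}$ such that $C_i\cap A(C_i)=\emptyset$ for all $i$. Let $0<k<d+2$. Then any $k$ of the subsets in $\mathcal F$ have nonempty intersection, and moreover there is a point $x$ in this intersection such that $A(x)$ belongs to the intersection of the remaining $d+2-k$ subsets of $\mathcal F$.
   Context: A BUT (Borsuk–Ulam type) manifold is a pair $(M,A)$ where $M$ is a connected compact piecewise-linear $d$-dimensional manifold without boundary and $A:M\to M$ is a free simplicial involution ($A(A(x))=x$, $A(x)\neq x$), such that for every continuous $g:M\to\mathbb{R}^d$ there is $x\in M$ with $g(A(x))=g(x)$. *)

(* PL manifolds are modelled as compact polyhedra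
   embedded in some Euclidean space 'rV[R]_n. *)
From HB Require Import structures.
From mathcomp Require Import all_boot all_order all_algebra.
From mathcomp Require Import all_classical all_reals all_analysis.
Set Implicit Arguments. Unset Strict Implicit. Unset Printing Implicit Defensive.
Import Order.TTheory GRing.Theory Num.Theory.
Import numFieldNormedType.Exports.
Local Open Scope classical_set_scope.
Local Open Scope ring_scope.

Section Defs.
Variable R : realType.

Definition conv_hull (n : nat) (P : seq 'rV[R]_n) : set 'rV[R]_n :=
  [set x | exists w : 'I_(size P) -> R,
     (forall i, 0 <= w i) /\ \sum_i w i = 1 /\ x = \sum_i w i *: nth 0 P i].

Definition affine_on (n m : nat) (S : set 'rV[R]_n) (f : 'rV[R]_n -> 'rV[R]_m) :=
  forall x y (t : R), S x -> S y -> 0 <= t -> t <= 1 ->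
    f (t *: x + (1 - t) *: y) = t *: f x + (1 - t) *: f y.

Definition PL_on (n m : nat) (N : set 'rV[R]_n) (f : 'rV[R]_n -> 'rV[R]_m) :=
  exists cells : seq (seq 'rV[R]_n),
    N = \bigcup_(c in [set c | c \in cells]) conv_hull c /\
    forall c, c \in cells -> affine_on (conv_hull c) f.

Definition cube (d : nat) : set 'rV[R]_d :=
  [set z | forall j, -1 <= z ord0 j <= 1].
Arguments cube d : clear implicits.

Definition PL_manifold (d n : nat) (M : set 'rV[R]_n) :=
  forall x, M x -> exists (N : set 'rV[R]_n) (h : 'rV[R]_n -> 'rV[R]_d)
                          (g : 'rV[R]_d -> 'rV[R]_n),
    [/\ N `<=` M,
        (exists r : R, 0 < r /\ (M `&` ball x r) `<=` N),
        PL_on N h /\ PL_on (cube d) g,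
        [/\ forall y, N y -> cube d (h y), forall z, cube d z -> N (g z),
            forall y, N y -> g (h y) = y & forall z, cube d z -> h (g z) = z]
      & h x = 0].

Definition face_real (n m : nat) (v : 'I_m -> 'rV[R]_n) (s : {set 'I_m}) :
  set 'rV[R]_n :=
  [set x | exists w : 'I_m -> R,
     [/\ forall i, 0 <= w i, forall i, i \notin s -> w i = 0,
         \sum_i w i = 1 & x = \sum_i w i *: v i]].

Definition aff_indep (n m : nat) (v : 'I_m -> 'rV[R]_n) (s : {set 'I_m}) :=
  forall w : 'I_m -> R, (forall i, i \notin s -> w i = 0) ->
    \sum_i w i = 0 -> \sum_i w i *: v i = 0 -> forall i, w i = 0.

Definition triangulates (n m : nat) (M : set 'rV[R]_n)
  (v : 'I_m -> 'rV[R]_n) (S : {set {set 'I_m}}) :=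
  [/\ injective v /\ (forall s, s \in S -> (0 < #|s|)%N),
      forall s t : {set 'I_m}, s \in S -> t \subset s -> (0 < #|t|)%N -> t \in S,
      forall s, s \in S -> aff_indep v s,
      forall s t : {set 'I_m}, s \in S -> t \in S ->
        face_real v s `&` face_real v t = face_real v (s :&: t)
    & M = \bigcup_(s in [set s | s \in S]) face_real v s].

Definition simplicial_on (n : nat) (M : set 'rV[R]_n) (A : 'rV[R]_n -> 'rV[R]_n) :=
  exists (m : nat) (v : 'I_m -> 'rV[R]_n) (S : {set {set 'I_m}}) (sigma : 'I_m -> 'I_m),
    [/\ triangulates M v S,
        forall s, s \in S -> sigma @: s \in S
      & forall w : 'I_m -> R,
          (exists2 s, s \in S & forall i, i \notin s -> w i = 0) ->
          (forall i, 0 <= w i) -> \sum_i w i = 1 ->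
          A (\sum_i w i *: v i) = \sum_i w i *: v (sigma i)].

Definition free_involution_on (n : nat) (M : set 'rV[R]_n) (A : 'rV[R]_n -> 'rV[R]_n) :=
  forall x, M x -> [/\ M (A x), A (A x) = x & A x <> x].

Definition BU_property (d n : nat) (M : set 'rV[R]_n) (A : 'rV[R]_n -> 'rV[R]_n) :=
  forall g : 'rV[R]_n -> 'rV[R]_d, {within M, continuous g} ->
    exists x, M x /\ g (A x) = g x.

Definition BUT_manifold (d n : nat) (M : set 'rV[R]_n) (A : 'rV[R]_n -> 'rV[R]_n) :=
  [/\ compact M /\ connected M, PL_manifold d M,
      free_involution_on M A, simplicial_on M A & BU_property d M A].

End Defs.

From HB Require Import structures.
From mathcomp Require Import all_boot all_order all_algebra.
From mathcomp Require Import all_classical all_reals all_analysis.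
From mathcomp Require Import lra zify.
Set Implicit Arguments. Unset Strict Implicit. Unset Printing Implicit Defensive.
Import Order.TTheory GRing.Theory Num.Theory.
Import numFieldNormedType.Exports.
Local Open Scope classical_set_scope.
Local Open Scope ring_scope.

(* For each i, phi_i y = d(y, C_i) / (d(y, C_i) + d(Ay, C_i)) is continuous on M,
   vanishes exactly on C_i and satisfies phi_i (Ay) = 1 - phi_i y.  (A is
   continuous: M is the compact image of a union of standard simplices under the
   barycentric map, and A lifts to the barycentric map of the permuted vertices.)
   Fix a in K and b outside K, and let r i be a or b according as i is in K.  The
   d differences phi_i - phi_(r i), i <> a, b, form a continuous odd map M -> R^d,
   which vanishes at some x by the Borsuk-Ulam property; so phi is constant at x on
   K and on its complement.  Since x and Ax are covered, some phi_j x is 0 and some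
   phi_l x is 1, hence one constant is 0, the other is 1, and x or Ax is the point
   sought. *)

Lemma continuous_within_image_compact (X Y Z : topologicalType) (D : set X)
    (p : X -> Y) (f : Y -> Z) (g : X -> Z) :
  hausdorff_space Y -> compact D -> continuous p -> continuous g ->
  (forall w, D w -> f (p w) = g w) -> {within p @` D, continuous f}.
Proof.
move=> hY cD cp cg fpg.
apply/continuous_closedP => B cB; apply/closed_subspaceP.
exists (p @` (D `&` g @^-1` B)).
  apply: compact_closed hY _; apply: continuous_compact.
    exact: continuous_subspaceT.
  by apply: compact_closedI cD _; move/continuous_closedP: cg; apply.
apply/seteqP; split => y.
  case=> [[w [Dw Bw] <-] _]; split; last by exists w.
  by change (B (f (p w))); rewrite fpg.
case=> By [w Dw wy]; split => //; exists w => //; split => //.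
by change (B (g w)); rewrite -fpg // wy.
Qed.

Section Continuity.
Variable R : realType.

Lemma continuous_sum (T : topologicalType) (V : normedModType R) (I : Type)
    (s : seq I) (F : I -> T -> V) x :
  (forall i, {for x, continuous (F i)}) ->
  {for x, continuous (fun t => \sum_(i <- s) F i t)}.
Proof.
move=> cF; elim: s => [|a s IHs].
  have -> : (fun t => \sum_(i <- [::]) F i t) = fun=> 0.
    by apply/funext => t; rewrite big_nil.
  exact: cst_continuous.
have -> : (fun t => \sum_(i <- a :: s) F i t) = F a + fun t => \sum_(i <- s) F i t.
  by apply/funext => t; rewrite big_cons.
exact: continuousD.
Qed.

Lemma continuous_row (T : topologicalType) d (f : 'I_d -> T -> R) x :
  (forall j, {for x, continuous (f j)}) ->
  {for x, continuous (fun y => \row_j f j y : 'rV[R]_d)}.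
Proof.
move=> cf.
have -> : (fun y => \row_j f j y) =
          (fun y => \sum_(j < d) f j y *: (delta_mx ord0 j : 'rV[R]_d)).
  apply/funext => y; apply/rowP => k; rewrite mxE summxE (bigD1 k) //= big1.
    by rewrite !mxE !eqxx mulr1 addr0.
  by move=> j jk; rewrite !mxE eqxx /= eq_sym (negbTE jk) mulr0.
by apply: continuous_sum => j; apply: continuousZr_tmp.
Qed.

End Continuity.

Section Barycentric.
Variable R : realType.

Definition barycenter n m (v : 'I_m -> 'rV[R]_n) (w : 'rV[R]_m) : 'rV[R]_n :=
  \sum_i w ord0 i *: v i.

Lemma continuous_barycenter n m (v : 'I_m -> 'rV[R]_n) : continuous (barycenter v).
Proof.
move=> w; apply: continuous_sum => i; apply: continuousZr_tmp.
exact: coord_continuous.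
Qed.

Definition std_face m (s : {set 'I_m}) : set 'rV[R]_m :=
  [set w | forall i, (if i \in s then [set x | 0 <= x] else [set 0]) (w ord0 i)]
  `&` [set w | \sum_i w ord0 i = 1].

Lemma std_faceP m (s : {set 'I_m}) w :
  std_face s w <-> [/\ forall i, 0 <= w ord0 i,
                      forall i, i \notin s -> w ord0 i = 0 & \sum_i w ord0 i = 1].
Proof.
split=> [[/= ws w1]|[w0 ws w1]]; last first.
  by split=> // i /=; case: ifP => si; [exact: w0|apply: ws; rewrite si].
by split=> // i; move: (ws i); case: (i \in s) => //= ->.
Qed.

Lemma closed_coordwise m (P : 'I_m -> set R) : (forall i, closed (P i)) ->
  closed [set w : 'rV[R]_m | forall i, P i (w ord0 i)].
Proof.
move=> cP.
have -> : [set w : 'rV[R]_m | forall i, P i (w ord0 i)] =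
          \bigcap_(i in setT) ((fun w : 'rV[R]_m => w ord0 i) @^-1` P i).
  by apply/seteqP; split => w /= wP i; [move=> _|]; exact: wP.
apply: closed_bigI => i _.
by move: (@coord_continuous R 1 m ord0 i) => /continuous_closedP; apply.
Qed.

Lemma compact_std_face m (s : {set 'I_m}) : compact (std_face s).
Proof.
apply: (@subclosed_compact _ _ [set w : 'rV[R]_m | forall i, `[0, 1]%classic (w ord0 i)]).
- apply: closedI.
    apply: (@closed_coordwise m (fun i => if i \in s then _ else _)) => i.
    by case: (i \in s); [exact: closed_ge|exact: closed_eq].
  have csum : continuous (fun w : 'rV[R]_m => \sum_i w ord0 i).
    by move=> w; apply: continuous_sum => i; exact: coord_continuous.
  by move: csum => /continuous_closedP /(_ [set x : R | x = 1] (@closed_eq R 1)).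
- exact: (@rV_compact R m (fun=> `[0, 1]%classic) (fun=> @segment_compact R 0 1)).
- move=> w /std_faceP[w0 _ w1] i /=; rewrite in_itv /= w0 -w1 (bigD1 i) //= lerDl.
  by apply: sumr_ge0 => j _.
Qed.

Lemma face_real_barycenter n m (v : 'I_m -> 'rV[R]_n) (s : {set 'I_m}) :
  face_real v s = barycenter v @` std_face s.
Proof.
apply/seteqP; split => x.
  case=> w [w0 ws w1 ->]; exists (\row_i w i).
    apply/std_faceP; split=> [i|i si|].
    - by rewrite mxE.
    - by rewrite mxE; exact: ws.
    by under eq_bigr do rewrite mxE.
  by rewrite /barycenter; under eq_bigr do rewrite mxE.
by case=> w /std_faceP[w0 ws w1] <-; exists (fun i => w ord0 i); split.
Qed.

Lemma simplicial_continuous n (M : set 'rV[R]_n) (A : 'rV[R]_n -> 'rV[R]_n) :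
  simplicial_on M A -> {within M, continuous A}.
Proof.
case=> m [v [S [sigma [[_ _ _ _ MU] _ Alin]]]].
pose D := \big[setU/set0]_(s <- enum S) std_face s.
have DP w : D w <-> exists2 s, s \in S & std_face s w.
  rewrite /D -bigcup_seq; split=> [[s /= sS Dw]|[s sS Dw]].
    by exists s; first rewrite -mem_enum.
  by exists s; first rewrite /= mem_enum.
have -> : M = barycenter v @` D.
  rewrite MU; apply/seteqP; split => y.
    case=> s /= sS; rewrite face_real_barycenter => -[w sw <-].
    by exists w => //; apply/DP; exists s.
  case=> w /DP[s sS sw] <-; exists s => //; rewrite face_real_barycenter.
  by exists w.
apply: (@continuous_within_image_compact _ _ _ _ _ _ (barycenter (v \o sigma))).
- exact: norm_hausdorff.
- by apply: bigsetU_compact => s _; exact: compact_std_face.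
- exact: continuous_barycenter.
- exact: continuous_barycenter.
move=> w /DP[s sS /std_faceP[w0 ws w1]]; apply: Alin => //.
by exists s.
Qed.

End Barycentric.

Section DistanceToSet.
Variables (R : realType) (V : normedModType R) (C : set V).

Definition dist_to (z : V) : R := fine (edist_inf C z).

Lemma dist_to_ge0 z : 0 <= dist_to z.
Proof. by rewrite fine_ge0 // edist_inf_ge0. Qed.

Hypothesis C0 : C !=set0.

Lemma edist_inf_fin_num z : edist_inf C z \is a fin_num.
Proof.
case: C0 => c Cc; rewrite ge0_fin_numE ?edist_inf_ge0 //.
apply: (@le_lt_trans _ _ (edist (z, c))); first by apply: ereal_inf_lbound; exists c.
have : edist (z, c) \is a fin_num.
  apply/edist_finP; exists (`|z - c| + 1); first by rewrite ltr_pwDr.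
  by rewrite -ball_normE /= ltrDl.
by rewrite ge0_fin_numE ?edist_ge0.
Qed.

Lemma continuous_dist_to : continuous dist_to.
Proof.
move=> z; apply: fine_cvg; rewrite fineK ?edist_inf_fin_num //.
exact: edist_inf_continuous.
Qed.

Lemma dist_to_eq0 z : closed C -> dist_to z = 0 <-> C z.
Proof.
move=> cC; split=> [dz|Cz]; last by rewrite /dist_to edist_inf0.
have ez : edist_inf C z = 0%E by rewrite -[LHS]fineK ?edist_inf_fin_num // -/(dist_to z) dz.
apply: cC => B /nbhs_ballP[e e0 eB].
have [_ [a Ca <-] za] := lb_ereal_inf_adherent e0 (edist_inf_fin_num z).
exists a; split => //; apply: eB; apply: (@edist_lt_ball _ _ _ (z, a)).
by move: za; rewrite /edist_inf in ez *; rewrite ez add0e.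
Qed.

End DistanceToSet.

Section AntipodalIndicator.
Variables (R : realType) (n : nat) (M : set 'rV[R]_n) (A : 'rV[R]_n -> 'rV[R]_n).
Hypothesis freeA : free_involution_on M A.

Definition antipodal_indicator (C : set 'rV[R]_n) (f : 'rV[R]_n -> R) :=
  [/\ {within M, continuous f}, forall y, M y -> f (A y) = 1 - f y
    & forall y, M y -> f y = 0 <-> C y].

Lemma antipodal_indicator_eq1 C f y : antipodal_indicator C f -> M y ->
  f y = 1 <-> C (A y).
Proof.
move=> [_ fA f0] My; have [MAy _ _] := freeA My.
rewrite -f0 // fA //; split=> [->|/eqP]; first by rewrite subrr.
by rewrite subr_eq0 => /eqP.
Qed.

Lemma exists_antipodal_indicator C : {within M, continuous A} -> closed C ->
  (forall y, C y -> ~ C (A y)) -> exists f, antipodal_indicator C f.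
Proof.
move=> cA cC CA; have [C0|C0] := pselect (C !=set0); last first.
  exists (fun=> 2^-1); split=> [|y _|y _].
  - by apply: continuous_subspaceT; exact: cst_continuous.
  - by rewrite [X in X - _](splitr 1) div1r addrK.
  - split=> [/eqP|Cy]; last by case: C0; exists y.
    by rewrite invr_eq0 pnatr_eq0.
pose dC := dist_to C.
have den_gt0 y : 0 < dC y + dC (A y).
  rewrite lt0r addr_ge0 ?dist_to_ge0 // andbT paddr_eq0 ?dist_to_ge0 //.
  by apply/negP => /andP[/eqP/(dist_to_eq0 C0 _ cC) Cy /eqP/(dist_to_eq0 C0 _ cC)/(CA _ Cy)].
exists (fun y => dC y / (dC y + dC (A y))); split.
- have cdC : continuous dC := continuous_dist_to C0.
  rewrite continuous_subspace_in => y _.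
  apply: (@continuousM R (subspace M) dC (fun z => (dC z + dC (A z))^-1)).
    exact: continuous_subspaceT.
  apply: (@continuousV R (subspace M) (fun z => dC z + dC (A z))).
    by rewrite gt_eqF.
  apply: (@continuousD R R^o (subspace M) dC (dC \o A)).
    exact: continuous_subspaceT.
  have cdCA : {within M, continuous (dC \o A)}.
    exact: (@within_continuous_comp _ _ _ M A dC (fun z _ => cdC z) cA).
  exact: cdCA.
- move=> y My; have [_ AAy _] := freeA My; rewrite AAy (addrC (dC (A y))).
  by rewrite -[X in X - _](divff (lt0r_neq0 (den_gt0 y))) -mulrBl addrC addrK.
- move=> y _; rewrite -(dist_to_eq0 C0 y cC); split=> [/eqP|dy]; last by rewrite /dC dy mul0r.
  by rewrite mulf_eq0 invr_eq0 (negbTE (lt0r_neq0 (den_gt0 y))) orbF => /eqP.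
Qed.

Lemma covering_partition_point (I : finType) (C : I -> set 'rV[R]_n)
    (phi : I -> 'rV[R]_n -> R) (K : {set I}) x :
  (forall i, antipodal_indicator (C i) (phi i)) -> (forall y, M y -> exists i, C i y) ->
  M x -> (forall i j, (i \in K) = (j \in K) -> phi i x = phi j x) ->
  exists y, [/\ M y, forall i, i \in K -> C i y & forall i, i \notin K -> C i (A y)].
Proof.
move=> phiC cov Mx phix; have [MAx AAx _] := freeA Mx.
have zero i : phi i x = 0 -> C i x by have [_ _ f0] := phiC i; move/(f0 _ Mx).
have one i : phi i x = 1 -> C i (A x) by move/(antipodal_indicator_eq1 (phiC i) Mx).
have [j Cjx] := cov x Mx; have [l ClAx] := cov (A x) MAx.
have phij : phi j x = 0 by have [_ _ f0] := phiC j; apply/(f0 _ Mx).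
have phil : phi l x = 1 by apply/(antipodal_indicator_eq1 (phiC l) Mx).
have jl : (j \in K) != (l \in K).
  by apply/negP => /eqP/phix; rewrite phij phil => /eqP; rewrite eq_sym oner_eq0.
have [jK|jK] := boolP (j \in K).
  have lK : l \notin K by move: jl; rewrite jK; case: (l \in K).
  exists x; split=> // i iK.
    by apply: zero; rewrite -phij; apply: phix; rewrite iK jK.
  by apply: one; rewrite -phil; apply: phix; rewrite (negbTE iK) (negbTE lK).
have lK : l \in K by move: jl; rewrite (negbTE jK); case: (l \in K).
exists (A x); split=> // i iK.
  by apply: one; rewrite -phil; apply: phix; rewrite iK lK.
by rewrite AAx; apply: zero; rewrite -phij; apply: phix; rewrite (negbTE iK) (negbTE jK).
Qed.

End AntipodalIndicator.

Section BorsukUlamConsequences.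
Variables (R : realType) (d n : nat) (M : set 'rV[R]_n) (A : 'rV[R]_n -> 'rV[R]_n).
Hypothesis BU : BU_property d M A.

Lemma BU_odd_zero (g : 'rV[R]_n -> 'rV[R]_d) : {within M, continuous g} ->
  (forall y, M y -> g (A y) = - g y) -> exists2 x, M x & g x = 0.
Proof.
move=> cg godd; have [x [Mx gAx]] := BU cg; exists x => //.
apply/rowP => j; have := congr1 (fun v : 'rV[R]_d => v ord0 j) gAx.
by rewrite godd // !mxE; lra.
Qed.

Lemma BU_coincidence (I : finType) (S : {set I}) (phi : I -> 'rV[R]_n -> R)
    (r : I -> I) :
  #|S| = d -> (forall i, {within M, continuous (phi i)}) ->
  (forall i y, M y -> phi i (A y) = 1 - phi i y) ->
  exists2 x, M x & forall i, i \in S -> phi i x = phi (r i) x.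
Proof.
move=> hS cphi phiA.
pose e (j : 'I_d) : I := enum_val (cast_ord (esym hS) j).
pose g y := \row_j (phi (e j) y - phi (r (e j)) y) : 'rV[R]_d.
have [||x Mx gx] := @BU_odd_zero g.
- rewrite continuous_subspace_in => y _; apply: continuous_row => j.
  by apply: continuousB; apply: cphi.
- by move=> y My; apply/rowP => j; rewrite !mxE !phiA //; lra.
exists x => // i iS; pose j := cast_ord hS (enum_rank_in iS i).
have ej : e j = i by rewrite /e cast_ordK enum_rankK_in.
by have := congr1 (fun v : 'rV[R]_d => v ord0 j) gx; rewrite !mxE ej; lra.
Qed.

Lemma BU_blockwise_constant (I : finType) (K : {set I}) (phi : I -> 'rV[R]_n -> R) :
  #|I| = d.+2 -> (0 < #|K|)%N -> (#|K| < d.+2)%N ->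
  (forall i, {within M, continuous (phi i)}) ->
  (forall i y, M y -> phi i (A y) = 1 - phi i y) ->
  exists2 x, M x & forall i j, (i \in K) = (j \in K) -> phi i x = phi j x.
Proof.
move=> hI K0 KN cphi phiA.
have [a aK] : exists a, a \in K by apply/card_gt0P.
have [b] : exists b, b \in ~: K.
  by apply/card_gt0P; move: (cardsC K); rewrite hI; lia.
rewrite inE => bK.
have ab : a != b by apply: contraNneq bK => <-.
pose r i := if i \in K then a else b.
have [|x Mx phix] := @BU_coincidence _ (~: [set a; b]) phi r _ cphi phiA.
  by move: (cardsC [set a; b]); rewrite cards2 ab hI; lia.
exists x => // i j ij.
have phir k : phi k x = phi (r k) x.
  have [|] := boolP (k \in ~: [set a; b]); first exact: phix.
  by rewrite !inE negbK /r => /orP[]/eqP ->; rewrite ?aK ?(negbTE bK).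
by rewrite phir (phir j) /r ij.
Qed.

End BorsukUlamConsequences.

Theorem theorem4p2 (R : realType) (d n : nat) (M : set 'rV[R]_n)
  (A : 'rV[R]_n -> 'rV[R]_n) (C : 'I_d.+2 -> set 'rV[R]_n) :
  BUT_manifold d M A ->
  (forall i, closed (C i) /\ C i `<=` M) ->
  (forall x, M x -> exists i, C i x) ->
  (forall i, C i `&` (A @` C i) = set0) ->
  forall K : {set 'I_d.+2}, (0 < #|K|)%N -> (#|K| < d.+2)%N ->
    exists x, [/\ M x, forall i, i \in K -> C i x
                     & forall i, i \notin K -> C i (A x)].
Proof.
move=> [_ _ freeA /simplicial_continuous cA BU] hC cov disj K K0 KN.
have CA i y : C i y -> ~ C i (A y).
  move=> Cy CAy; have : (C i `&` A @` C i) (A y) by split=> //; exists y.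
  by rewrite disj.
have /choice[phi phiC] : forall i, exists f, antipodal_indicator M A (C i) f.
  by move=> i; apply: exists_antipodal_indicator => //; [exact: (hC i).1|exact: CA].
have cphi i : {within M, continuous (phi i)} by case: (phiC i).
have phiA i y : M y -> phi i (A y) = 1 - phi i y by case: (phiC i) => _ fA _; exact: fA.
have [x Mx phix] := BU_blockwise_constant BU (card_ord _) K0 KN cphi phiA.
exact: covering_partition_point phiC cov Mx phix.
Qed.
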